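(* Let $(\mathcal{X},\mathcal{F},\sigma)$ be a probability space with an $\alpha$-homogeneous atomic filtration, $0<\alpha\le1/2$. Let $w\in L^1(\mathcal{X})$, $w\ge0$, and suppose that for a cube $Q_0\in\mathcal{D}$ and a constant $A$ we have $\langle w^*\rangle_{Q_0}\le A\langle w\rangle_{Q_0}$. Let $E\subset Q_0$ be a union of some cubes in $\mathcal{D}(Q_0)=\{K\in\mathcal{D}:K\subset Q_0\}$. Then \[ w(E)\le 2A\,\frac{\ln(2/\alpha)}{\ln(|Q_0|/|E|)}\,w(Q_0), \] where $w(F)=\int_F w\,d\sigma$.
   Context: An atomic filtration on a probability space $(\mathcal{X},\mathcal{F},\sigma)$ is an increasing sequence of $\sigma$-algebras $\mathcal{F}_n\subset\mathcal{F}$, $n\ge0$, with $\mathcal{F}_0=\{\varnothing,\mathcal{X}\}$, $\mathcal{F}$ generated by the $\mathcal{F}_n$, and such that for each $n$ there is a countable collection $\mathcal{D}_n$ of disjoint sets (''cubes'') with every set of $\mathcal{F}_n$ a union of sets of $\mathcal{D}_n$. Write $\mathcal{D}=\bigcup_n\mathcal{D}_n$, $|A|=\sigma(A)$, and for $Q\in\mathcal{D}_n$ let $\operatorname{ch}Q=\{R\in\mathcal{D}_{n+1}:R\subset Q\}$. The filtration is $\alpha$-homogeneous if $|Q'|\ge\alpha|Q|$ for every cube $Q$ and every $Q'\in\operatorname{ch}Q$. For $|A|>0$, $\langle f\rangle_A=|A|^{-1}\int_A f$. Let $\mathbf{E}_nf=\sum_{Q\in\mathcal{D}_n}\langle f\rangle_Q\mathbf{1}_Q$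 and $f^*(x)=\sup_{n\ge0}|\mathbf{E}_nf(x)|$ (martingale maximal function). *)

From HB Require Import structures.
From mathcomp Require Import all_boot all_order all_algebra.
From mathcomp Require Import all_classical all_reals all_analysis.
Set Implicit Arguments. Unset Strict Implicit. Unset Printing Implicit Defensive.
Import Order.TTheory GRing.Theory Num.Theory.
Import numFieldNormedType.Exports.
Local Open Scope classical_set_scope.
Local Open Scope ring_scope.

Section defs.
Context {d : measure_display} {T : measurableType d} {R : realType}.

Definition filtration (F : nat -> set (set T)) : Prop :=
  [/\ forall n, sigma_algebra setT (F n),
      forall n, F n `<=` measurable,
      forall n, F n `<=` F n.+1,
      F 0%N = [set set0; setT] &
      (measurable : set (set T)) = <<s \bigcup_n F n >>].

Definition atomic (F D : nat -> set (set T)) : Prop :=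
  [/\ forall n, countable (D n),
      forall n Q Q', D n Q -> D n Q' -> Q <> Q' -> Q `&` Q' = set0,
      forall n, D n `<=` F n &
      forall n S, F n S ->
        exists C : set (set T), C `<=` D n /\ S = \bigcup_(Q in C) Q].

Definition cubes (D : nat -> set (set T)) : set (set T) := \bigcup_n D n.

Definition homogeneous (sigma : set T -> \bar R) (D : nat -> set (set T))
    (alpha : R) : Prop :=
  forall n Q Q', D n Q -> D n.+1 Q' -> Q' `<=` Q ->
    (alpha%:E * sigma Q <= sigma Q')%E.

Definition avg (sigma : {measure set T -> \bar R}) (A : set T) (f : T -> R)
  : \bar R :=
  ((fine (sigma A))^-1)%:E * \int[sigma]_(y in A) (f y)%:E.

Definition condexp (sigma : {measure set T -> \bar R}) (D : nat -> set (set T))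
  (n : nat) (f : T -> R) (x : T) : \bar R :=
  (\sum_(Q \in D n `&` [set Q | Q x]) avg sigma Q f)%E.

Definition maxf (sigma : {measure set T -> \bar R}) (D : nat -> set (set T))
  (f : T -> R) (x : T) : \bar R :=
  ereal_sup (range (fun n => `|condexp sigma D n f x|%E)).

Definition wmeas (sigma : {measure set T -> \bar R}) (w : T -> R) (A : set T)
  : \bar R := \int[sigma]_(x in A) (w x)%:E.

End defs.

(* Grow E in stages: replace the current set S by the union of the maximal
   cubes K ⊆ Q0 with |K ∩ S| ≥ (α/2)|K|, and stop at the first stage i where
   |S| ≥ (α/2)|Q0|.  The parent of a maximal cube fails this test, so
   homogeneity gives |K ∩ S| ≤ |K|/2: each stage at least doubles |S| (hence
   the process stops) and multiplies it by at most 2/α, which yields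
   ln(|Q0|/|E|) ≤ 2 ln(2/α) (i/2 + 1 - |S|/|Q0|).  On K \ S, of measure at
   least |K|/2, we have w* ≥ ⟨w⟩_K, so each stage adds w(E)/2 to the integral
   of w* over S, while w* ≥ ⟨w⟩_Q0 on Q0 \ S.  Comparing with
   ⟨w*⟩_Q0 ≤ A ⟨w⟩_Q0 gives the bound. *)

From HB Require Import structures.
From mathcomp Require Import all_boot all_order all_algebra.
From mathcomp Require Import all_classical all_reals all_analysis.
From mathcomp Require Import measurable_realfun ring lra.
Import Order.TTheory GRing.Theory Num.Theory.
Import numFieldNormedType.Exports.
Local Open Scope classical_set_scope.
Local Open Scope ring_scope.
Set Implicit Arguments. Unset Strict Implicit. Unset Printing Implicit Defensive.

Section real_bounds.
Context {R : realType}.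

Lemma ln4_ge1 : 1 <= ln (4 : R).
Proof.
have ln_half : ln (2^-1 : R) <= - 2^-1.
  by have := @le_ln1Dx R (- 2^-1) ltac:(lra); rewrite (_ : 1 - 2^-1 = 2^-1) //; lra.
rewrite (_ : 4 = (2^-1 * 2^-1)^-1); last by field.
by rewrite lnV ?posrE ?mulr_gt0 ?invr_gt0 // lnM ?posrE ?invr_gt0 //; lra.
Qed.

Lemma ln_ge_chord (s t : R) : 0 < s <= 4^-1 -> s <= t <= 1 ->
  2 * ln s * (1 - t) <= ln t.
Proof.
move=> /andP[s0 s4] /andP[st t1].
have lns_le : ln s <= -1.
  have : 1 <= ln s^-1.
    apply: le_trans ln4_ge1 _; rewrite ler_ln ?posrE ?invr_gt0 //.
    by rewrite -[4]invrK lef_pV2 ?posrE ?invr_gt0 //; lra.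
  by rewrite lnV ?posrE //; lra.
have [t_half|half_t] := lerP t 2^-1.
  have : ln s <= ln t by rewrite ler_ln ?posrE //; lra.
  nra.
have t0 : 0 < t by lra.
have tt : t^-1 * t = 1 by rewrite mulVf //; lra.
have : ln t^-1 <= t^-1 - 1.
  have := @le_ln1Dx R (t^-1 - 1); rewrite (_ : 1 + _ = t^-1); last lra.
  by apply; rewrite -invr_gt0 in t0; lra.
have inv_t_le2 : t^-1 <= 2.
  by rewrite -[2]invrK lef_pV2 ?posrE ?invr_gt0 //; lra.
rewrite lnV ?posrE //; nra.
Qed.

Lemma ln_ratio_le (s q a v : R) (i : nat) : 0 < s <= 4^-1 -> 0 < q -> 0 < a ->
  s * q <= v <= q -> s ^+ i * v <= a ->
  ln (q / a) <= 2 * ln s^-1 * (i%:R / 2 + (1 - v / q)).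
Proof.
move=> /andP[s0 s4] q0 a0 /andP[sqv vq] hi.
have v0 : 0 < v by nra.
have sv : s <= v / q <= 1.
  by rewrite ler_pdivlMr // ler_pdivrMr // mul1r sqv.
have := ln_ge_chord (ltac:(lra) : 0 < s <= 4^-1) sv.
have : ln (s ^+ i * v) <= ln a by rewrite ler_ln ?posrE ?mulr_gt0 ?exprn_gt0.
rewrite lnM ?posrE ?exprn_gt0 // lnXn // -mulr_natl lnV ?posrE //.
rewrite !ln_div ?posrE //; lra.
Qed.

Lemma le_ln_ratio_bound (alpha A q a v nE nQ : R) (i : nat) :
  0 < alpha <= 1 / 2 -> 0 < a < q -> alpha / 2 * q <= v <= q ->
  (alpha / 2) ^+ i * v <= a -> 0 <= nE <= nQ ->
  i%:R / 2 * nE + q^-1 * nQ * (q - v) <= A * nQ ->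
  nE <= 2 * A * ln (2 / alpha) / ln (q / a) * nQ.
Proof.
move=> /andP[al0 al1] /andP[a0 aq] /andP[sqv vq] hi /andP[nE0 nEQ] hA.
have q0 : 0 < q by lra.
have s_le : 0 < alpha / 2 <= 4^-1 by apply/andP; split; lra.
have := ln_ratio_le s_le q0 a0 (ltac:(lra) : alpha / 2 * q <= v <= q) hi.
rewrite invf_div; set L := ln (2 / alpha) => hln.
have L0 : 0 <= L by apply: ln_ge0; rewrite ler_pdivlMr //; lra.
have vq1 : 0 <= 1 - v / q by rewrite subr_ge0 ler_pdivrMr // mul1r.
have gap : q^-1 * nQ * (q - v) = nQ * (1 - v / q) by field; lra.
have lnpos : 0 < ln (q / a) by apply: ln_gt0; rewrite ltr_pdivlMr // mul1r.
rewrite mulrAC ler_pdivlMr //.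
have mass : nE * (i%:R / 2 + (1 - v / q)) <= A * nQ.
  by rewrite gap in hA; apply: le_trans hA; nra.
apply: (le_trans (ler_wpM2l nE0 hln)); nra.
Qed.

Lemma half_mass_le_avg_mul (k k2 kS nK nS : R) : k = k2 + kS -> 2 * kS <= k ->
  0 <= kS -> 0 <= k2 -> 0 <= nS <= nK -> (k = 0 -> nS = 0) ->
  2^-1 * nS <= k^-1 * nK * k2.
Proof.
move=> ek hk kS0 k20 /andP[nS0 nSK] hz.
have [k0|kn0] := eqVneq k 0; first by rewrite (hz k0) k0 invr0 !mul0r mulr0.
have kp : 0 < k by rewrite lt_neqAle eq_sym kn0 /=; lra.
have t0 : 0 <= k^-1 * nK by rewrite mulr_ge0 ?invr_ge0; lra.
have tk : k^-1 * nK * k = nK by rewrite mulrAC mulVf // mul1r.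
nra.
Qed.

End real_bounds.

Lemma exists_least_nat (P : nat -> Prop) n0 : P n0 ->
  exists n, P n /\ forall k, (k < n)%N -> ~ P k.
Proof.
move=> P0; have ex : exists n, `[< P n >] by exists n0; exact/asboolP.
case: (ex_minnP ex) => n /asboolP Pn hmin; exists n; split => // k kn Pk.
by have := hmin k (asboolT Pk); rewrite leqNgt kn.
Qed.

Section countable_enum.
Context {T : Type}.

Lemma countable_enum (S : set (set T)) : countable S ->
  exists e : nat -> set T, [/\ forall i, e i = set0 \/ S (e i),
    forall i j, e i = e j -> e i !=set0 -> i = j &
    forall K, S K -> K !=set0 -> exists i, e i = K].
Proof.
move/countable_injP => [f finj].
pose e i := match pselect (exists K, [/\ S K, K !=set0 & f K = i]) with
  | left h => proj1_sig (cid h) | right _ => set0 end.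
have eP i : e i = set0 \/ [/\ S (e i), e i !=set0 & f (e i) = i].
  rewrite /e; case: pselect => [h|_]; [right; exact: (proj2_sig (cid h))|by left].
exists e; split.
- by move=> i; case: (eP i) => [->|[]]; [left|right].
- move=> i j eij ne.
  case: (eP i) => [h|[_ _ fi]]; first by move: ne; rewrite h => /set0P; rewrite eqxx.
  case: (eP j) => [h|[_ _ fj]]; first by move: ne; rewrite eij h => /set0P; rewrite eqxx.
  by rewrite -fi -fj eij.
- move=> K SK neK; exists (f K); rewrite /e; case: pselect => [h|nh].
    case: (proj2_sig (cid h)) => S1 _ f1; apply: finj => //; exact: mem_set.
  by exfalso; apply: nh; exists K.
Qed.

Lemma countable_bigcup_enum (S : set (set T)) : countable S ->
  exists e : nat -> set T, [/\ forall i, e i = set0 \/ S (e i),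
   (forall K K', S K -> S K' -> K `&` K' !=set0 -> K = K') -> trivIset setT e &
   \bigcup_(K in S) K = \bigcup_i e i].
Proof.
move=> /countable_enum [e [e_in e_inj e_onto]]; exists e; split => //.
- move=> dis i j _ _ [y [yi yj]].
  case: (e_in i) => [ei0|Si]; first by move: yi; rewrite ei0.
  case: (e_in j) => [ej0|Sj]; first by move: yj; rewrite ej0.
  by apply: e_inj; [exact: dis Si Sj (ex_intro _ y (conj yi yj))|exists y].
- apply/seteqP; split => y.
    move=> [K SK Ky]; have [i ei] := e_onto K SK (ex_intro _ y Ky).
    by exists i => //; rewrite ei.
  move=> [i _ yi]; case: (e_in i) => [ei0|Si]; first by move: yi; rewrite ei0.
  by exists (e i).
Qed.

End countable_enum.

Section cubes.
Context {d : measure_display} {T : measurableType d} (F D : nat -> set (set T)).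
Hypotheses (hF : filtration F) (hD : atomic F D).

Lemma filtration_le n m : (n <= m)%N -> F n `<=` F m.
Proof.
case: hF => _ _ F_sub _ _; elim: m => [|m IH]; first by rewrite leqn0 => /eqP ->.
rewrite leq_eqVlt => /orP[/eqP -> //|]; rewrite ltnS => /IH h A /h; exact: F_sub.
Qed.

Lemma cube_measurable n K : D n K -> measurable K.
Proof. by case: hF hD => _ F_meas _ _ _ [_ _ D_F _] /D_F /F_meas. Qed.

Lemma cubes_measurable K : cubes D K -> measurable K.
Proof. by move=> [n _]; exact: cube_measurable. Qed.

Lemma cube_cover n x : exists K, D n K /\ K x.
Proof.
case: hF hD => F_sigma _ _ _ _ [_ _ _ D_gen].
have : F n setT.
  by case: (F_sigma n) => F0 FC _; rewrite -(setD0 setT); exact: FC.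
move=> /D_gen [C [CD eC]].
have : (\bigcup_(Q in C) Q) x by rewrite -eC.
by move=> [K CK Kx]; exists K; split => //; exact: CD.
Qed.

Lemma cube_uniq n K K' x : D n K -> D n K' -> K x -> K' x -> K = K'.
Proof.
case: hD => _ D_dis _ _ DK DK' Kx K'x; apply: contrapT => neq.
have : (K `&` K') x by [].
by rewrite (D_dis n K K' DK DK' neq).
Qed.

Lemma cube_nested n p Q Q' : (n <= p)%N -> D n Q -> D p Q' ->
  Q' `<=` Q \/ Q' `&` Q = set0.
Proof.
case: hD => _ D_dis D_F D_gen np DQ DQ'.
have [C [CD eC]] := D_gen p Q (filtration_le np (D_F _ _ DQ)).
have [CQ'|nCQ'] := pselect (C Q'); first by left; rewrite eC => y Q'y; exists Q'.
right; rewrite eC; apply/seteqP; split => // y [Q'y [K CK Ky]].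
have neq : K <> Q' by move=> eKQ'; apply: nCQ'; rewrite -eKQ'.
by rewrite -(D_dis p K Q' (CD _ CK) DQ' neq).
Qed.

Lemma cubes_countable : countable (cubes D).
Proof. by case: hD => D_count _ _ _; apply: bigcup_countable. Qed.

Lemma bigcup_cubes_measurable (C : set (set T)) : C `<=` cubes D ->
  measurable (\bigcup_(K in C) K).
Proof.
move=> CD; have cC : countable C.
  by apply: sub_countable cubes_countable; exact: subset_card_le.
have [e [e_in _ ->]] := countable_bigcup_enum cC.
apply: bigcupT_measurable => i.
by case: (e_in i) => [->//|/CD]; exact: cubes_measurable.
Qed.

Definition is_cube_union (S : set T) : Prop :=
  forall x, S x -> exists K, [/\ cubes D K, K `<=` S & K x].

Lemma is_cube_union_bigcup (C : set (set T)) : C `<=` cubes D ->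
  is_cube_union (\bigcup_(K in C) K).
Proof.
move=> CD x [K CK Kx]; exists K; split => //; first exact: CD.
by move=> y Ky; exists K.
Qed.

End cubes.

Section maximal_function.
Context {d : measure_display} {T : measurableType d} {R : realType}
  (sigma : {measure set T -> \bar R}) (F D : nat -> set (set T)).
Hypotheses (hF : filtration F) (hD : atomic F D).
Context (w : T -> R) (w_ge0 : forall x, 0 <= w x).
Local Open Scope ereal_scope.

Lemma avg_ge0 K : 0 <= avg sigma K w.
Proof.
rewrite /avg mule_ge0 ?lee_fin ?invr_ge0 ?fine_ge0 //.
by apply: integral_ge0 => x _; rewrite lee_fin.
Qed.

Lemma condexp_cube n K x : D n K -> K x -> condexp sigma D n w x = avg sigma K w.
Proof.
move=> DK Kx; rewrite /condexp.
have -> : D n `&` [set Q | Q x] = [set K].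
  apply/seteqP; split => [Q [DQ Qx]|Q ->] //; exact: (cube_uniq hD DQ DK Qx Kx).
by rewrite fsbig_set1.
Qed.

Lemma avg_le_maxf n K x : D n K -> K x -> avg sigma K w <= maxf sigma D w x.
Proof.
move=> DK Kx; apply: ereal_sup_ubound; exists n => //.
by rewrite (condexp_cube DK Kx) gee0_abs // avg_ge0.
Qed.

Lemma maxf_ge0 x : 0 <= maxf sigma D w x.
Proof.
have [K [DK Kx]] := cube_cover hF hD 0 x.
exact: le_trans (avg_ge0 K) (avg_le_maxf DK Kx).
Qed.

Lemma measurable_maxf A : measurable_fun A (maxf sigma D w : T -> \bar R).
Proof.
apply: (measurable_funS measurableT) => //.
have condexp_meas n : measurable_fun setT (fun x => `|condexp sigma D n w x|).
  move=> _ Y mY; rewrite setTI.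
  have -> : (fun x => `|condexp sigma D n w x|) @^-1` Y =
      \bigcup_(K in [set K | D n K /\ Y `|avg sigma K w|]) K.
    apply/seteqP; split => x.
      move=> Yx; have [K [DK Kx]] := cube_cover hF hD n x.
      by exists K => //; split => //; rewrite -(condexp_cube DK Kx).
    by move=> [K [DK YK] Kx]; rewrite /preimage /= (condexp_cube DK Kx).
  by apply: (bigcup_cubes_measurable hF hD) => K [DK _]; exists n.
have -> : maxf sigma D w =
    (fun x => esups ((fun n x => `|condexp sigma D n w x|) ^~ x) 0%N).
  apply: funext => x; rewrite /maxf /esups /sdrop /=.
  by congr ereal_sup; apply/seteqP; split => y [n _ <-]; exists n.
exact: measurable_fun_esups.
Qed.

End maximal_function.

Lemma measure_setI_series {d : measure_display} {T : measurableType d} {R : realType}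
    (mu : {measure set T -> \bar R}) (e : nat -> set T) (S : set T) :
  (forall i, measurable (e i)) -> trivIset setT e -> measurable S ->
  S `<=` \bigcup_i e i -> mu S = (\sum_(i <oo) mu (e i `&` S))%E.
Proof.
move=> me te mS Se.
have eS : S = \bigcup_i (e i `&` S) by rewrite -setI_bigcupl setIidr.
rewrite [in LHS]eS measure_semi_bigcup -?eS //; last exact: trivIset_setIr.
by move=> i; exact: measurableI.
Qed.

Section finite_volumes.
Context {d : measure_display} {T : measurableType d} {R : realType}
  (sigma : probability T R) (w : T -> R).
Hypotheses (w_int : sigma.-integrable setT (fun x => (w x)%:E))
  (w_ge0 : forall x, 0 <= w x).

Definition vol (A : set T) : R := fine (sigma A).
Definition wvol (A : set T) : R := fine (wmeas sigma w A).

Lemma volE A : measurable A -> sigma A = (vol A)%:E.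
Proof.
move=> mA; rewrite /vol fineK // ge0_fin_numE ?measure_ge0 //.
by rewrite (le_lt_trans (probability_le1 _ mA)) // ltey.
Qed.

Lemma vol_ge0 A : 0 <= vol A.
Proof. by rewrite /vol fine_ge0. Qed.

Lemma vol_le A B : measurable A -> measurable B -> A `<=` B -> vol A <= vol B.
Proof. by move=> mA mB AB; rewrite -lee_fin -!volE // le_measure // inE. Qed.

Lemma vol_le1 A : measurable A -> vol A <= 1.
Proof. by move=> mA; rewrite -lee_fin -volE // probability_le1. Qed.

Lemma vol_setDI A B : measurable A -> measurable B ->
  vol A = vol (A `\` B) + vol (A `&` B).
Proof.
move=> mA mB; have mAB := measurableD mA mB; have mAIB := measurableI _ _ mA mB.
by apply: EFin_inj; rewrite EFinD -!volE // (measureDI _ mA mB).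
Qed.

Lemma measurable_w A : measurable_fun A (fun x => (w x)%:E).
Proof. by apply: (measurable_funS measurableT) => //; exact: measurable_int w_int. Qed.

Lemma wmeas_ge0 A : (0 <= wmeas sigma w A)%E.
Proof. by apply: integral_ge0 => x _; rewrite lee_fin. Qed.

Lemma wmeas_le A B : measurable B -> A `<=` B -> measurable A ->
  (wmeas sigma w A <= wmeas sigma w B)%E.
Proof.
move=> mB AB mA; apply: ge0_subset_integral => //; first exact: measurable_w.
by move=> x _; rewrite lee_fin.
Qed.

Lemma wvolE A : measurable A -> wmeas sigma w A = (wvol A)%:E.
Proof.
move=> mA; rewrite /wvol fineK // ge0_fin_numE ?wmeas_ge0 //.
have /integrableP [_ int_fin] := w_int; apply: le_lt_trans int_fin.
apply: le_trans (wmeas_le measurableT (subsetT A) mA) _.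
apply: ge0_le_integral => //; first by move=> x _; rewrite lee_fin.
- exact: measurable_w.
- by apply: measurableT_comp => //; exact: measurable_w.
- by move=> x _; rewrite gee0_abs // lee_fin.
Qed.

Lemma wvol_ge0 A : 0 <= wvol A.
Proof. by rewrite /wvol fine_ge0 // wmeas_ge0. Qed.

Lemma wvol_le A B : measurable B -> A `<=` B -> measurable A -> wvol A <= wvol B.
Proof. by move=> mB AB mA; rewrite -lee_fin -!wvolE // wmeas_le. Qed.

Lemma wmeas_null A : measurable A -> vol A = 0 -> wmeas sigma w A = 0%E.
Proof.
move=> mA A0; apply: null_set_integral => //; first exact: measurable_w.
by have := volE mA; rewrite A0.
Qed.

End finite_volumes.

Section maximal_function_integrals.
Context {d : measure_display} {T : measurableType d} {R : realType}
  (sigma : probability T R) (F D : nat -> set (set T)).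
Hypotheses (hF : filtration F) (hD : atomic F D).
Context (w : T -> R) (w_int : sigma.-integrable setT (fun x => (w x)%:E))
  (w_ge0 : forall x, 0 <= w x).
Local Open Scope ereal_scope.

Lemma avgE K : measurable K ->
  avg sigma K w = ((vol sigma K)^-1 * wvol sigma w K)%:E.
Proof. by move=> mK; rewrite /avg EFinM -(wvolE w_int w_ge0 mK). Qed.

Lemma integral_maxf_setD A B : measurable A -> measurable B -> A `<=` B ->
  \int[sigma]_(x in B) maxf sigma D w x =
  \int[sigma]_(x in A) maxf sigma D w x +
  \int[sigma]_(x in B `\` A) maxf sigma D w x.
Proof.
move=> mA mB AB; have mBA := measurableD mB mA.
have := @ge0_integral_setU _ _ _ sigma A (B `\` A) mA mBA (maxf sigma D w).
rewrite setDUK //; apply; first exact: (measurable_maxf _ hF hD).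
- by move=> x _; exact: (maxf_ge0 sigma hF hD w_ge0).
- by rewrite disj_set2E setDIK.
Qed.

Lemma avg_mul_le_integral_maxf n K X : D n K -> measurable X -> X `<=` K ->
  avg sigma K w * sigma X <= \int[sigma]_(x in X) maxf sigma D w x.
Proof.
move=> DK mX XK; rewrite -integral_cst //; apply: ge0_le_integral => //.
- by move=> x _; exact: avg_ge0.
- exact: (measurable_maxf _ hF hD).
- by move=> x Xx; exact: (avg_le_maxf sigma hD w_ge0 DK (XK x Xx)).
Qed.

End maximal_function_integrals.

Section stopping_time.
Context {d : measure_display} {T : measurableType d} {R : realType}
  (sigma : probability T R) (F D : nat -> set (set T)).
Hypotheses (hF : filtration F) (hD : atomic F D).
Context (alpha : R) (hhom : homogeneous sigma D alpha)
  (halpha : 0 < alpha <= 1 / 2).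
Context (w : T -> R) (w_int : sigma.-integrable setT (fun x => (w x)%:E))
  (w_ge0 : forall x, 0 <= w x).
Context (Q0 : set T) (m : nat) (DQ0 : D m Q0).
Local Open Scope ereal_scope.

Definition heavy (S K : set T) : Prop :=
  [/\ cubes D K, K `<=` Q0 & (alpha / 2)%:E * sigma K <= sigma (K `&` S)].

Definition maximal_heavy (S K : set T) : Prop :=
  heavy S K /\ forall K', heavy S K' -> K `&` K' !=set0 -> K' `<=` K.

Definition grow (S : set T) : set T := \bigcup_(K in maximal_heavy S) K.

Lemma heavy_sub_maximal S K0 x : heavy S K0 -> K0 x ->
  exists K, maximal_heavy S K /\ K x.
Proof.
move=> hK0 K0x; case: (hK0) => -[n0 _ DK0] _ _.
have [n [[K [DK hK Kx]] n_min]] :=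
  exists_least_nat (P := fun n => exists K, [/\ D n K, heavy S K & K x])
    (ex_intro _ K0 (And3 DK0 hK0 K0x)).
exists K; split => //; split => // K' hK' [y [Ky K'y]].
case: (hK') => -[n' _ DK'] _ _.
have [n'n|nn'] := leqP n' n.
- have [KK'|dis] := cube_nested hF hD n'n DK' DK; last first.
    by have : (K `&` K') y by []; rewrite dis.
  move: n'n; rewrite leq_eqVlt => /orP[/eqP en|lt].
    by subst n'; rewrite (cube_uniq hD DK' DK (KK' x Kx) Kx).
  by exfalso; apply: (n_min n' lt); exists K'; split => //; exact: KK'.
- have [//|dis] := cube_nested hF hD (ltnW nn') DK DK'.
  by have : (K' `&` K) y by []; rewrite dis.
Qed.

Lemma maximal_heavy_eq S K K' : maximal_heavy S K -> maximal_heavy S K' ->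
  K `&` K' !=set0 -> K = K'.
Proof.
move=> [hK maxK] [hK' maxK'] KK'; apply/seteqP; split; last exact: maxK.
by apply: maxK' hK _; rewrite setIC.
Qed.

Lemma maximal_heavy_parent S K : ~ heavy S Q0 -> maximal_heavy S K -> K !=set0 ->
  exists n P, [/\ D n P, D n.+1 K, K `<=` P &
                  sigma (P `&` S) < (alpha / 2)%:E * sigma P].
Proof.
move=> nhQ0 [hK maxK] [x Kx]; case: (hK) => -[n0 _ DK0] KQ0 _.
have [n [DK n_min]] := exists_least_nat (P := fun n => D n K) DK0.
have [nm|mn] := leqP n m.
  have [Q0K|dis] := cube_nested hF hD nm DK DQ0; last first.
    have : (Q0 `&` K) x by split => //; exact: KQ0.
    by rewrite dis.
  have eQ0K : Q0 = K by apply/seteqP; split.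
  by case: nhQ0; rewrite eQ0K.
have [p en] : exists p, n = p.+1 by exists n.-1; rewrite prednK // (leq_ltn_trans _ mn).
subst n.
rewrite ltnS in mn.
have [P [DP Px]] := cube_cover hF hD p x.
have PQ0 : P `<=` Q0.
  have [//|dis] := cube_nested hF hD mn DQ0 DP.
  have : (P `&` Q0) x by split => //; exact: KQ0.
  by rewrite dis.
have KP : K `<=` P.
  have [//|dis] := cube_nested hF hD (leqnSn p) DP DK.
  by have : (K `&` P) x by []; rewrite dis.
exists p, P; split => //; rewrite ltNge; apply/negP => PS.
have hP : heavy S P by split => //; exists p.
have eKP : K = P by apply/seteqP; split => //; apply: maxK hP _; exists x.
by apply: (n_min p) => //; rewrite eKP.
Qed.

Lemma maximal_heavy_half S K : measurable S -> ~ heavy S Q0 ->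
  maximal_heavy S K -> 2%:E * sigma (K `&` S) <= sigma K.
Proof.
move=> mS nhQ0 mhK; have [->|/set0P K0] := eqVneq K set0.
  by rewrite set0I measure0 mule0.
have [n [P [DP DK KP PS]]] := maximal_heavy_parent nhQ0 mhK K0.
have mP := cube_measurable hF hD DP; have mK := cube_measurable hF hD DK.
have /andP[a0 _] := halpha.
have := hhom DP DK KP; have : sigma (K `&` S) <= sigma (P `&` S).
  by apply: le_measure; rewrite ?inE; [exact: measurableI|exact: measurableI|exact: setSI].
move: PS; rewrite !volE //; try exact: measurableI.
by rewrite -!EFinM !lte_fin !lee_fin; nra.
Qed.

Lemma maximal_heavy_gain S K : measurable S -> ~ heavy S Q0 -> maximal_heavy S K ->
  (2^-1)%:E * wmeas sigma w (K `&` S) <=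
  \int[sigma]_(x in K `\` S) maxf sigma D w x.
Proof.
move=> mS nhQ0 mhK; have := maximal_heavy_half mS nhQ0 mhK.
case: (mhK) => -[[n _ DK] _ _] _.
have mK := cube_measurable hF hD DK.
have mKS := measurableD mK mS; have mKIS := measurableI _ _ mK mS.
move=> half; apply: le_trans (avg_mul_le_integral_maxf sigma hF hD w_ge0 DK mKS _);
  last exact: subDsetl.
rewrite (avgE w_int w_ge0 mK) (wvolE w_int w_ge0 mKIS) volE // -!EFinM lee_fin.
move: half; rewrite !volE // -EFinM lee_fin => half.
have KS := vol_setDI sigma mK mS.
have := vol_ge0 sigma (K `\` S); have := vol_ge0 sigma (K `&` S) => KIS0 KS0.
apply: half_mass_le_avg_mul KS half KIS0 KS0 _ _.
  by rewrite wvol_ge0 //= (wvol_le w_int w_ge0 mK _ mKIS) //; exact: subIsetl.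
move=> K0; have KIS_null : vol sigma (K `&` S) = 0%R.
  apply/eqP; rewrite eq_le vol_ge0 andbT -K0 (vol_setDI sigma mK mS).
  by apply: ler_wpDl; [exact: vol_ge0|exact: lexx].
by apply: EFin_inj; rewrite -(wvolE w_int w_ge0 mKIS) (wmeas_null w_int mKIS).
Qed.

Lemma measurable_grow S : measurable (grow S).
Proof. by apply: (bigcup_cubes_measurable hF hD) => K [[]]. Qed.

Lemma grow_sub S : grow S `<=` Q0.
Proof. by move=> x [K [[_ KQ0 _] _] Kx]; exact: KQ0. Qed.

Lemma is_cube_union_grow S : is_cube_union D (grow S).
Proof. by apply: is_cube_union_bigcup => K [[]]. Qed.

Lemma sub_grow S : S `<=` Q0 -> is_cube_union D S -> S `<=` grow S.
Proof.
move=> SQ0 cS x Sx; have [K [cK KS Kx]] := cS x Sx.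
have hK : heavy S K.
  split => //; first exact: subset_trans KS SQ0.
  rewrite setIidl // (volE sigma (cubes_measurable hF hD cK)) -EFinM lee_fin.
  have /andP[a0 a1] := halpha; have := vol_ge0 sigma K; nra.
by have [K' [mhK' K'x]] := heavy_sub_maximal hK Kx; exists K'.
Qed.

Lemma grow_enum S : exists e : nat -> set T,
  [/\ forall i, e i = set0 \/ maximal_heavy S (e i),
      forall i, measurable (e i), trivIset setT e & grow S = \bigcup_i e i].
Proof.
have max_cubes : maximal_heavy S `<=` cubes D by move=> K [[]].
have count : countable (maximal_heavy S).
  by apply: sub_countable (cubes_countable hD); exact: subset_card_le.
have [e [e_max te egrow]] := countable_bigcup_enum count.
exists e; split => //; last exact: te (@maximal_heavy_eq S).
by move=> i; case: (e_max i) => [->//|/max_cubes]; exact: (cubes_measurable hF hD).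
Qed.

Lemma grow_measure_le S : measurable S -> S `<=` Q0 -> is_cube_union D S ->
  (alpha / 2)%:E * sigma (grow S) <= sigma S.
Proof.
move=> mS SQ0 cS; have Sgrow := sub_grow SQ0 cS.
have [e [e_max me te egrow]] := grow_enum S; rewrite egrow in Sgrow *.
rewrite measure_semi_bigcup //; last by rewrite -egrow; exact: measurable_grow.
rewrite (measure_setI_series sigma me te mS Sgrow) -nneseriesZl //.
have /andP[a0 _] := halpha.
apply: lee_nneseries => [i _ _|i _]; first by rewrite mule_ge0 // lee_fin; lra.
by case: (e_max i) => [->|[[]]]; first by rewrite set0I measure0 mule0.
Qed.

Lemma grow_measure_ge S : measurable S -> S `<=` Q0 -> is_cube_union D S ->
  ~ heavy S Q0 -> 2%:E * sigma S <= sigma (grow S).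
Proof.
move=> mS SQ0 cS nhQ0; have Sgrow := sub_grow SQ0 cS.
have [e [e_max me te egrow]] := grow_enum S; rewrite egrow in Sgrow *.
rewrite measure_semi_bigcup //; last by rewrite -egrow; exact: measurable_grow.
rewrite (measure_setI_series sigma me te mS Sgrow) -nneseriesZl //.
apply: lee_nneseries => [i _ _|i _]; first by rewrite mule_ge0.
case: (e_max i) => [->|]; first by rewrite set0I measure0 mule0.
exact: maximal_heavy_half.
Qed.

Lemma grow_integral_maxf S : measurable S -> S `<=` Q0 -> is_cube_union D S ->
  ~ heavy S Q0 ->
  \int[sigma]_(x in S) maxf sigma D w x + (2^-1)%:E * wmeas sigma w S <=
  \int[sigma]_(x in grow S) maxf sigma D w x.
Proof.
move=> mS SQ0 cS nhQ0; have Sgrow := sub_grow SQ0 cS.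
rewrite (integral_maxf_setD sigma hF hD w_ge0 mS (measurable_grow S) Sgrow) leeD2l //.
have [e [e_max me te egrow]] := grow_enum S; rewrite egrow in Sgrow *.
have eS : S = \bigcup_i (e i `&` S) by rewrite -setI_bigcupl setIidr.
rewrite /wmeas [in X in _ * X]eS setD_bigcupl.
rewrite ge0_integral_bigcup //; last 4 first.
- by move=> i; exact: measurableI.
- by apply: (measurable_w w_int).
- by move=> x _; rewrite lee_fin.
- exact: trivIset_setIr.
rewrite ge0_integral_bigcup //; last 4 first.
- by move=> i; exact: measurableD.
- exact: (measurable_maxf _ hF hD).
- by move=> x _; exact: (maxf_ge0 sigma hF hD w_ge0).
- by move=> i j _ _ [x [[ei _] [ej _]]]; apply: te => //; exists x.
rewrite -nneseriesZl; last by move=> i _; exact: wmeas_ge0.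
apply: lee_nneseries => [i _ _|i _]; first by rewrite mule_ge0 ?wmeas_ge0.
case: (e_max i) => [->|]; last exact: maximal_heavy_gain.
rewrite set0I set0D integral_set0 /wmeas integral_set0 mule0 //.
Qed.

Lemma heavy_Q0E S : measurable S -> S `<=` Q0 ->
  heavy S Q0 <-> (alpha / 2 * vol sigma Q0 <= vol sigma S)%R.
Proof.
move=> mS SQ0; have mQ0 := cube_measurable hF hD DQ0.
rewrite /heavy setIidr // (volE sigma mQ0) (volE sigma mS) -EFinM lee_fin.
by split => [[]//|h]; split => //; exists m.
Qed.

Lemma integral_maxf_Q0_ge S (c : R) : measurable S -> S `<=` Q0 ->
  c%:E <= \int[sigma]_(x in S) maxf sigma D w x ->
  (c + (vol sigma Q0)^-1 * wvol sigma w Q0 * (vol sigma Q0 - vol sigma S))%:E <=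
  \int[sigma]_(x in Q0) maxf sigma D w x.
Proof.
move=> mS SQ0 cS; have mQ0 := cube_measurable hF hD DQ0.
have mQ0S := measurableD mQ0 mS.
rewrite (integral_maxf_setD sigma hF hD w_ge0 mS mQ0 SQ0) EFinD leeD //.
apply: le_trans (avg_mul_le_integral_maxf sigma hF hD w_ge0 DQ0 mQ0S _);
  last exact: subDsetl.
have -> : (vol sigma Q0 - vol sigma S = vol sigma (Q0 `\` S))%R.
  by rewrite (vol_setDI sigma mQ0 mS) setIidr // addrK.
by rewrite (avgE w_int w_ge0 mQ0) (volE sigma mQ0S) -EFinM.
Qed.

Lemma le_A_mul_wvol (A c : R) : (0 < vol sigma Q0)%R ->
  ((vol sigma Q0)^-1)%:E * \int[sigma]_(x in Q0) maxf sigma D w x <=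
    A%:E * avg sigma Q0 w ->
  c%:E <= \int[sigma]_(x in Q0) maxf sigma D w x -> (c <= A * wvol sigma w Q0)%R.
Proof.
move=> Q0pos; rewrite (avgE w_int w_ge0 (cube_measurable hF hD DQ0)) -EFinM.
case: (\int[sigma]_(x in Q0) _) => [r| |] //.
  rewrite -EFinM !lee_fin => hA cr; apply: le_trans cr _.
  by move: hA; rewrite mulrCA ler_pM2l ?invr_gt0.
by rewrite mulry gtr0_sg ?invr_gt0 // mul1e leye_eq.
Qed.

Section iteration.
Variable E : set T.
Hypotheses (mE : measurable E) (EQ0 : E `<=` Q0) (cE : is_cube_union D E).

Lemma iter_grow_struct j : [/\ measurable (iter j grow E), E `<=` iter j grow E,
  iter j grow E `<=` Q0 & is_cube_union D (iter j grow E)].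
Proof.
elim: j => [|j [mS ES SQ0 cS]] /=; first by split.
split.
- exact: measurable_grow.
- exact: subset_trans ES (sub_grow SQ0 cS).
- exact: grow_sub.
- exact: is_cube_union_grow.
Qed.

Lemma iter_grow_bounds j :
  (forall k, (k < j)%N -> ~ heavy (iter k grow E) Q0) ->
  [/\ (2 ^+ j * vol sigma E <= vol sigma (iter j grow E))%R,
      ((alpha / 2) ^+ j * vol sigma (iter j grow E) <= vol sigma E)%R &
      ((j%:R / 2 * wvol sigma w E)%:E <=
         \int[sigma]_(x in iter j grow E) maxf sigma D w x)].
Proof.
elim: j => [_|j IH light].
  rewrite !expr0 !mul1r !mul0r; split => //.
  by apply: integral_ge0 => x _; exact: (maxf_ge0 sigma hF hD w_ge0).
have [h2 hal hint] := IH (fun k kj => light k (ltnW kj)).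
have [mS ES SQ0 cS] := iter_grow_struct j.
have nhQ0 := light j (ltnSn j).
rewrite iterS; set S := iter j grow E in h2 hal hint mS ES SQ0 cS nhQ0 *.
have mS' := measurable_grow S.
have ge := grow_measure_ge mS SQ0 cS nhQ0.
have le := grow_measure_le mS SQ0 cS.
have gi := grow_integral_maxf mS SQ0 cS nhQ0.
move: ge le; rewrite !volE // -!EFinM !lee_fin => ge le.
have /andP[a0 _] := halpha.
split.
- by rewrite exprS -mulrA; apply: le_trans ge; exact: ler_wpM2l.
- rewrite exprSr -mulrA; apply: le_trans hal; apply: ler_wpM2l => //.
  by apply: exprn_ge0; lra.
- apply: le_trans gi; rewrite (wvolE w_int w_ge0 mS) -EFinM.
  rewrite -natr1 mulrDl mulrDl mul1r EFinD leeD // lee_fin ler_wpM2l //.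
  exact: (wvol_le w_int w_ge0 mS ES mE).
Qed.

Lemma exists_stopping_index : (0 < vol sigma E)%R ->
  exists i, heavy (iter i grow E) Q0 /\
    forall k, (k < i)%N -> ~ heavy (iter k grow E) Q0.
Proof.
move=> E0; suff [j hj] : exists j, heavy (iter j grow E) Q0.
  exact: exists_least_nat hj.
apply: contrapT => never.
have [j j_large] : exists j : nat, ((vol sigma E)^-1 < j%:R)%R.
  by exists (Num.bound (vol sigma E)^-1); apply: archi_boundP; rewrite invr_ge0 ltW.
have [h2 _ _] := @iter_grow_bounds j (fun k _ hk => never (ex_intro _ k hk)).
have [mS _ _ _] := iter_grow_struct j.
have S1 := vol_le1 sigma mS.
have j_le : (j%:R <= 2 ^+ j :> R)%R.
  by rewrite -natrX ler_nat; apply: ltnW; apply: ltn_expl.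
have EE : ((vol sigma E)^-1 * vol sigma E = 1)%R by rewrite mulVf // gt_eqF.
nra.
Qed.

Lemma wvol_le_log_bound (A : R) :
  (0 < vol sigma E)%R -> (vol sigma E < vol sigma Q0)%R ->
  ((vol sigma Q0)^-1)%:E * \int[sigma]_(x in Q0) maxf sigma D w x <=
    A%:E * avg sigma Q0 w ->
  (wvol sigma w E <= 2 * A * ln (2 / alpha) / ln (vol sigma Q0 / vol sigma E)
                       * wvol sigma w Q0)%R.
Proof.
move=> Epos EQ0lt hA; have mQ0 := cube_measurable hF hD DQ0.
have [i [hi light]] := exists_stopping_index Epos.
have [mS _ SQ0 _] := iter_grow_struct i.
have [_ hal hint] := iter_grow_bounds light.
apply: le_ln_ratio_bound halpha _ _ hal _ _.
- by rewrite Epos.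
- by apply/andP; split; [exact/(heavy_Q0E mS SQ0)|exact: vol_le].
- by rewrite wvol_ge0 // (wvol_le w_int w_ge0 mQ0 EQ0 mE).
- apply: le_A_mul_wvol hA (integral_maxf_Q0_ge mS SQ0 hint).
  exact: lt_trans Epos EQ0lt.
Qed.

End iteration.

End stopping_time.

Theorem lemma4p2 (d : measure_display) (T : measurableType d) (R : realType)
  (sigma : probability T R) (F D : nat -> set (set T)) (alpha : R)
  (hF : filtration F) (hD : atomic F D) (hhom : homogeneous sigma D alpha)
  (halpha : 0 < alpha <= 1 / 2)
  (w : T -> R) (hwint : sigma.-integrable setT (fun x => (w x)%:E))
  (hw0 : forall x, 0 <= w x)
  (Q0 : set T) (hQ0 : cubes D Q0) (A : R)
  (hA : (((fine (sigma Q0))^-1)%:E * \int[sigma]_(x in Q0) maxf sigma D w x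
          <= A%:E * avg sigma Q0 w)%E)
  (E : set T) (hEQ0 : E `<=` Q0)
  (hEu : exists C : set (set T),
           C `<=` [set K | cubes D K /\ K `<=` Q0] /\ E = \bigcup_(K in C) K)
  (hEsm : (sigma E < sigma Q0)%E) :
  (wmeas sigma w E <=
     (2 * A * ln (2 / alpha) / ln (fine (sigma Q0) / fine (sigma E)))%:E
       * wmeas sigma w Q0)%E.
Proof.
have [m _ DQ0] := hQ0; have mQ0 := cube_measurable hF hD DQ0.
have [C [CQ0 eE]] := hEu; have CD : C `<=` cubes D by move=> K /CQ0[].
have mE : measurable E by rewrite eE; exact: (bigcup_cubes_measurable hF hD CD).
have cE : is_cube_union D E by rewrite eE; exact: is_cube_union_bigcup.
rewrite -/(vol sigma Q0) -/(vol sigma E).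
have [E0|Epos] := eqVneq (vol sigma E) 0.
  (* [x / 0 = 0] and [ln 0 = 0], so both sides vanish. *)
  rewrite (wmeas_null hwint mE E0) E0.
  have -> : ln (vol sigma Q0 / 0) = 0 :> R by rewrite ln0 // invr0 mulr0.
  by rewrite invr0 mulr0 mul0e.
have {}Epos : 0 < vol sigma E by rewrite lt_neqAle eq_sym Epos vol_ge0.
rewrite (wvolE hwint hw0 mE) (wvolE hwint hw0 mQ0) -EFinM lee_fin.
apply: (wvol_le_log_bound hF hD hhom halpha hwint hw0 DQ0 mE hEQ0 cE Epos _ hA).
by rewrite -lte_fin -!volE.
Qed.
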